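(* Let $r\ge0$ and $\delta\ge0$, and let $\overline{D}_\delta=\{z\in\mathbb{C}:|z|\le\delta\}$. Then $f_{c_2}\circ f_{c_1}(\overline{D}_\delta)\subset\overline{D}_\delta$ for every $c_1,c_2\in\overline{B}(-1,r)=\{c'\in\mathbb{C}:|c'+1|\le r\}$ if and only if $\delta^4+2(1+r)\delta^2+r^2+3r\le\delta$.
   Context: $f_c(z)=z^2+c$ for $c\in\mathbb{C}$. *)

From Stdlib Require Import Reals.
From Coquelicot Require Import Coquelicot.

Definition fc (c z : C) : C := (z * z + c)%C.

Definition cdisk (a : C) (rho : R) (z : C) : Prop := (Cmod (z - a) <= rho)%R.

From Stdlib Require Import Reals Lra.
From Coquelicot Require Import Coquelicot.

(* Writing [v = z^2 + c1 + 1], one has [f_c1 z = v - 1] and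
   [f_c2 (f_c1 z) = v (v - 2) + (c2 + 1)].  For [|z| <= delta] and
   [|c_i + 1| <= r] the triangle inequality bounds this by
   [(delta^2 + r) (delta^2 + r + 2) + r], which is the left-hand side of the
   criterion; the bound is attained at [z = i delta], [c1 = -1 - r],
   [c2 = -1 + r], where all three terms are real and of the same sign. *)

Local Open Scope R_scope.

Lemma cdisk_RtoC (a rho x : R) : cdisk (RtoC a) rho (RtoC x) <-> Rabs (x - a) <= rho.
Proof.
  unfold cdisk. rewrite <- Cmod_R, RtoC_minus. reflexivity.
Qed.

Lemma cdisk0 (rho : R) (z : C) : cdisk 0 rho z <-> Cmod z <= rho.
Proof.
  unfold cdisk. replace (z - 0)%C with z by ring. reflexivity.
Qed.

Lemma fc_fc_factor (c1 c2 z : C) :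
  fc c2 (fc c1 z) =
    ((z * z + (c1 + 1)) * (z * z + (c1 + 1) - 2) + (c2 + 1))%C.
Proof. unfold fc. ring. Qed.

Lemma Cmod_fc_fc_le (r delta : R) (c1 c2 z : C) :
  cdisk (-1) r c1 -> cdisk (-1) r c2 -> cdisk 0 delta z ->
  Cmod (fc c2 (fc c1 z)) <= (delta ^ 2 + r) * (delta ^ 2 + r + 2) + r.
Proof.
  rewrite cdisk0. unfold cdisk.
  replace (c1 - -1)%C with (c1 + 1)%C by ring.
  replace (c2 - -1)%C with (c2 + 1)%C by ring.
  intros Hc1 Hc2 Hz.
  rewrite fc_fc_factor.
  set (v := (z * z + (c1 + 1))%C).
  assert (Hv : Cmod v <= delta ^ 2 + r).
  { unfold v. eapply Rle_trans; [apply Cmod_triangle |].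
    rewrite Cmod_mult. pose proof (Cmod_ge_0 z). nra. }
  assert (Hv2 : Cmod (v - 2) <= delta ^ 2 + r + 2).
  { eapply Rle_trans; [apply Cmod_triangle |].
    rewrite Cmod_opp, Cmod_R, Rabs_pos_eq; lra. }
  eapply Rle_trans; [apply Cmod_triangle |].
  rewrite Cmod_mult.
  pose proof (Cmod_ge_0 v). pose proof (Cmod_ge_0 (v - 2)).
  apply Rplus_le_compat; [apply Rmult_le_compat |]; assumption.
Qed.

Lemma fc_fc_extremal (r delta : R) :
  fc (RtoC (-1 + r)) (fc (RtoC (-1 - r)) (Ci * RtoC delta)%C) =
    RtoC ((delta ^ 2 + r) * (delta ^ 2 + r + 2) + r).
Proof. unfold fc, Ci, RtoC, Cplus, Cmult; simpl. f_equal; ring. Qed.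

Theorem lemma4p16 (r delta : R) (hr : (0 <= r)%R) (hd : (0 <= delta)%R) :
  (forall c1 c2 : C, cdisk (-1)%C r c1 -> cdisk (-1)%C r c2 ->
     forall z : C, cdisk 0%C delta z -> cdisk 0%C delta (fc c2 (fc c1 z)))
  <->
  (delta ^ 4 + 2 * (1 + r) * delta ^ 2 + r ^ 2 + 3 * r <= delta)%R.
Proof.
  replace (delta ^ 4 + 2 * (1 + r) * delta ^ 2 + r ^ 2 + 3 * r)
    with ((delta ^ 2 + r) * (delta ^ 2 + r + 2) + r) by ring.
  split.
  - intros Hinv.
    assert (Hc1 : cdisk (-1) r (RtoC (-1 - r))).
    { apply cdisk_RtoC. rewrite Rabs_left1; lra. }
    assert (Hc2 : cdisk (-1) r (RtoC (-1 + r))).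
    { apply cdisk_RtoC. rewrite Rabs_pos_eq; lra. }
    assert (Hz : cdisk 0 delta (Ci * RtoC delta)%C).
    { apply cdisk0. rewrite Cmod_mult, Cmod_Ci, Cmod_R, Rabs_pos_eq; lra. }
    specialize (Hinv _ _ Hc1 Hc2 _ Hz).
    rewrite cdisk0, fc_fc_extremal, Cmod_R in Hinv.
    rewrite Rabs_pos_eq in Hinv; [exact Hinv |].
    pose proof (pow2_ge_0 delta). nra.
  - intros Hcrit c1 c2 Hc1 Hc2 z Hz.
    apply cdisk0.
    eapply Rle_trans; [exact (Cmod_fc_fc_le _ _ _ _ _ Hc1 Hc2 Hz) | exact Hcrit].
Qed.
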